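(* Let $k$ be a field of characteristic $0$, $L/k$ a field extension, $S\in\mathbf{Fam}_L$ with data $a,b,t_0\in L$, and let $\{\mathcal{T}_\gamma\}$ be the one-parameter family of trisections described in the context. Let $R=(x_R,y_R,t_R)\in\mathcal{E}$ with $t_R\neq t_0$. Then there exists a unique $\gamma\in L(x_R,y_R,t_R)$ such that $R\in\mathcal{T}_\gamma$. In particular, if $R$ is $L$-rational, there is $\gamma\in L$ with $R\in\mathcal{T}_\gamma$.
   Context: $S$ is a del Pezzo surface of degree one in $\mathbb{P}(2,3,1,1)$, coordinates $(X:Y:Z:W)$, given by $Y^2=X^3+F(Z,W)X+G(Z,W)$, $F,G\in k[Z,W]$ homogeneous of degrees $4,6$; $f(t)=F(t,1)$, $g(t)=G(t,1)$; $\mathcal{E}:y^2=x^3+f(t)x+g(t)$ is the rational elliptic surface obtained by blowing up the base point of $|-K_S|$. $S\in\mathbf{Fam}_L$ means there exist $a,b,t_0\in L$ with $t_0\neq0$, $at_0+b\neq0$, $f(t_0)\neq-(at_0+b)^4/3$, such that $t_0$ is a double root of $P(t)=-f(t)^2/4+(at+b)^4f(t)/6+(at+b)^2g(t)+(at+b)^8/108$. Let $Q=((at_0+b)^2/3,\ (at_0+b)^3/6+f(t_0)/(2(at_0+b)),\ t_0)$. For a parameter $\gamma$, $\mathcal{T}_\gamma\subset\mathcal{E}$ is the curve $y=axt+bx+c(\gamma)t^3+d(\gamma)t^2+e(\gamma)t+\gamma$, where $c(\gamma),d(\gamma),e(\gamma)$ are the coefficients, uniquely determined by $\gamma$, for which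 $\mathcal{T}_\gamma$ has a triple point at $Q$. *)

From HB Require Import structures.
From mathcomp Require Import all_boot all_order all_algebra.
Set Implicit Arguments. Unset Strict Implicit. Unset Printing Implicit Defensive.
Import GRing.Theory.
Local Open Scope ring_scope.

(* F(1,W) for a form F(Z,W) of degree n with F(t,1) = p(t): the reversal
   sum_i p_i W^(n-i). *)
Definition homrev (R : nzRingType) (n : nat) (p : {poly R}) : {poly R} :=
  \poly_(i < n.+1) p`_(n - i).

Definition singular_pt (K : fieldType) (f g : {poly K}) (x y t : K) : Prop :=
  [/\ y ^+ 2 = x ^+ 3 + f.[t] * x + g.[t], 2 * y = 0,
      3 * x ^+ 2 + f.[t] = 0 & f^`().[t] * x + g^`().[t] = 0].

(* S : Y^2 = X^3 + F X + G in P(2,3,1,1) is smooth (geometrically): no singular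
   point over any field extension, in the charts W = 1 and Z = 1.  (The points
   with Z = W = 0 reduce to (1:1:0:0), which is always smooth.) *)
Definition smooth_dP1 (k : fieldType) (f g : {poly k}) : Prop :=
  forall (K : fieldType) (phi : {rmorphism k -> K}) (x y t : K),
    ~ singular_pt (map_poly phi f) (map_poly phi g) x y t /\
    ~ singular_pt (map_poly phi (homrev 4 f)) (map_poly phi (homrev 6 g)) x y t.

Definition PFam (L : fieldType) (fL gL : {poly L}) (a b : L) : {poly L} :=
  let l := a *: 'X + b%:P in
  (- (4%:R)^-1) *: fL ^+ 2 + (6%:R)^-1 *: (l ^+ 4 * fL) + l ^+ 2 * gL
  + (108%:R)^-1 *: l ^+ 8.

Definition double_root (L : fieldType) (p : {poly L}) (t0 : L) : Prop :=
  (('X - t0%:P) ^+ 2 %| p) && ~~ (('X - t0%:P) ^+ 3 %| p).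

Definition in_Fam (L : fieldType) (fL gL : {poly L}) (a b t0 : L) : Prop :=
  [/\ t0 != 0, a * t0 + b != 0, fL.[t0] != - (a * t0 + b) ^+ 4 / 3%:R
    & double_root (PFam fL gL a b) t0].

(* x- and y-coordinates of Q (its t-coordinate is t0) *)
Definition Qx (L : fieldType) (a b t0 : L) : L := (a * t0 + b) ^+ 2 / 3%:R.
Definition Qy (L : fieldType) (fL : {poly L}) (a b t0 : L) : L :=
  (a * t0 + b) ^+ 3 / 6%:R + fL.[t0] / (2%:R * (a * t0 + b)).

(* The plane equation H(x,t) = l(x,t)^2 - x^3 - f(t) x - g(t) of the image of
   T : y = l(x,t) := a x t + b x + c t^3 + d t^2 + e t + gam  in the (x,t)-plane,
   as a polynomial in x (outer variable) with coefficients polynomials in t. *)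
Definition trisec_poly (M : fieldType) (fM gM : {poly M}) (a b c d e gam : M)
  : {poly {poly M}} :=
  let l : {poly {poly M}} :=
    'X * (a *: 'X + b%:P)%:P
    + (c *: 'X ^+ 3 + d *: 'X ^+ 2 + e *: 'X + gam%:P)%:P in
  l ^+ 2 - 'X ^+ 3 - 'X * fM%:P - gM%:P.

(* the plane curve P = 0 has multiplicity >= m at (x0,t0): all monomials of
   total degree < m of P(x0 + X, t0 + T) vanish *)
Definition mult_ge (M : fieldType) (m : nat) (P : {poly {poly M}}) (x0 t0 : M)
  : Prop :=
  let P' := map_poly (fun q : {poly M} => q \Po ('X + t0%:P))
                     (P \Po ('X + (x0%:P)%:P)) in
  forall i j : nat, (i + j < m)%N -> P'`_i`_j = 0.

Definition on_trisec (M : fieldType) (a b c d e gam x y t : M) : Prop :=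
  y = a * x * t + b * x + c * t ^+ 3 + d * t ^+ 2 + e * t + gam.

Definition triple_at (M : fieldType) (fM gM : {poly M}) (a b c d e gam xQ yQ tQ : M)
  : Prop :=
  on_trisec a b c d e gam xQ yQ tQ /\
  mult_ge 3 (trisec_poly fM gM a b c d e gam) xQ tQ.

Definition in_T (M : fieldType) (fM gM : {poly M}) (a b xQ yQ tQ gam x y t : M)
  : Prop :=
  exists c d e : M,
    triple_at fM gM a b c d e gam xQ yQ tQ /\ on_trisec a b c d e gam x y t.

Definition subfield_pred (M : fieldType) (S : M -> Prop) : Prop :=
  [/\ S 0, S 1, (forall x y, S x -> S y -> S (x + y)), (forall x, S x -> S (- x))
    & (forall x y, S x -> S y -> S (x * y)) /\ (forall x, S x -> x != 0 -> S x^-1)].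

(* z belongs to the subfield L(x,y,t) of M generated by j(L) and x, y, t *)
Definition in_gen_field (L M : fieldType) (j : {rmorphism L -> M}) (x y t z : M)
  : Prop :=
  forall S : M -> Prop, subfield_pred S -> (forall l, S (j l)) ->
    S x -> S y -> S t -> S z.

From HB Require Import structures.
From mathcomp Require Import all_boot all_order all_algebra.
From mathcomp Require Import ring.
Set Implicit Arguments.
Unset Strict Implicit.
Unset Printing Implicit Defensive.
Import GRing.Theory.
Local Open Scope ring_scope.

(* Write the trisection as y = x sigma(t) + mu(t) with sigma = a t + b and
   mu = c t^3 + d t^2 + e t + gam, and put u(t) = x_Q sigma(t) + mu(t).  A triple
   point at Q = (x_Q, y_Q, t0) means u(t0) = y_Q together with the vanishing of
   the six Taylor coefficients of total degree < 3 of l^2 - x^3 - f x - g at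
   (x_Q, t0).  For the given x_Q and y_Q two of them hold identically, two more
   follow from P(t0) = P'(t0) = 0, and the last two fix u'(t0) and u''(t0)/2.
   Hence the triple point prescribes the 2-jet of mu at t0 and leaves its leading
   coefficient free; a point R with t_R <> t0 then determines mu by interpolation,
   and gam = mu(0) is a rational expression in a, b, t0, the Taylor coefficients
   of f and g at t0 and the coordinates of R.  The second claim is the first one
   applied to the subfield j(L). *)

Section TaylorShift.
Variable R : comNzRingType.
Implicit Types (p q : {poly R}) (t : R).

Lemma coef1M p q : (p * q)`_1 = p`_0 * q`_1 + p`_1 * q`_0.
Proof. by rewrite coefM !big_ord_recr big_ord0 /= add0r. Qed.

Lemma coef2M p q : (p * q)`_2 = p`_0 * q`_2 + p`_1 * q`_1 + p`_2 * q`_0.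
Proof. by rewrite coefM !big_ord_recr big_ord0 /= add0r. Qed.

Lemma coef0Xn p n : (p ^+ n)`_0 = p`_0 ^+ n.
Proof. by rewrite -!horner_coef0 horner_exp. Qed.

Lemma coef1Xn p n : (p ^+ n.+1)`_1 = n.+1%:R * p`_0 ^+ n * p`_1.
Proof.
elim: n => [|n IHn]; first by rewrite expr1 expr0 !mul1r.
by rewrite exprS coef1M IHn !coef0Xn !exprS; ring.
Qed.

Lemma coef0_shift p t : (p \Po ('X + t%:P))`_0 = p.[t].
Proof. by rewrite -horner_coef0 horner_comp !hornerE. Qed.

Lemma shift_linear a b t : (a *: 'X + b%:P) \Po ('X + t%:P) = Poly [:: a * t + b; a].
Proof.
rewrite /= !cons_poly_def comp_polyD comp_polyZ comp_polyX comp_polyC.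
by rewrite mul0r add0r -!mul_polyC rmorphD rmorphM; ring.
Qed.

Definition cubic (c d e gam : R) : {poly R} :=
  c *: 'X ^+ 3 + d *: 'X ^+ 2 + e *: 'X + gam%:P.

Lemma horner_cubic c d e gam t :
  (cubic c d e gam).[t] = c * t ^+ 3 + d * t ^+ 2 + e * t + gam.
Proof. by rewrite !hornerE. Qed.

Lemma shift_cubic c d e gam t :
  cubic c d e gam \Po ('X + t%:P) =
  Poly [:: (cubic c d e gam).[t]; 3%:R * c * t ^+ 2 + 2%:R * d * t + e;
           3%:R * c * t + d; c].
Proof.
rewrite horner_cubic /= !cons_poly_def !comp_polyD !comp_polyZ !rmorphXn /=.
rewrite comp_polyX comp_polyC mul0r add0r -!mul_polyC.
by rewrite !(rmorphD, rmorphM, rmorphXn, rmorph_nat); ring.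
Qed.

End TaylorShift.

Lemma shift_coef01_eq0 (F : fieldType) (p : {poly F}) (t : F) :
  ('X - t%:P) ^+ 2 %| p ->
  (p \Po ('X + t%:P))`_0 = 0 /\ (p \Po ('X + t%:P))`_1 = 0.
Proof.
case/dvdpP => q ->; rewrite comp_polyM rmorphXn /= comp_polyB comp_polyX.
by rewrite comp_polyC addrK !coefMXn.
Qed.

Section PlaneEquation.
Variable F : fieldType.

Definition plane_eqn (sigma mu phi psi : {poly F}) : {poly {poly F}} :=
  ('X * sigma%:P + mu%:P) ^+ 2 - 'X ^+ 3 - 'X * phi%:P - psi%:P.

Lemma trisec_polyE (f g : {poly F}) (a b c d e gam : F) :
  trisec_poly f g a b c d e gam = plane_eqn (a *: 'X + b%:P) (cubic c d e gam) f g.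
Proof. by []. Qed.

Lemma plane_eqn_shift (sigma mu phi psi : {poly F}) (x0 t0 : F) :
  let sh p := p \Po ('X + t0%:P) in
  let u := x0%:P * sh sigma + sh mu in
  map_poly sh (plane_eqn sigma mu phi psi \Po ('X + (x0%:P)%:P)) =
  Poly [:: u ^+ 2 - (x0 ^+ 3)%:P - x0%:P * sh phi - sh psi;
           (sh sigma * u) *+ 2 - (3%:R * x0 ^+ 2)%:P - sh phi;
           sh sigma ^+ 2 - (3%:R * x0)%:P; -1].
Proof.
move=> sh u; rewrite /= !cons_poly_def /u.
rewrite !(rmorphB, rmorphD, rmorphM, rmorphXn) /= !comp_polyX !comp_polyC.
rewrite !(rmorphB, rmorphD, rmorphM, rmorphXn, rmorphMn, rmorph_nat, rmorphN) /=.
by rewrite !map_polyX !map_polyC /= comp_polyC /sh; ring.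
Qed.

Variables (x0 t0 a b : F) (mu phi psi : {poly F}).
Local Notation sh p := (p \Po ('X + t0%:P)).
Local Notation s := (a * t0 + b).
Local Notation u0 := (x0 * s + (sh mu)`_0).
Local Notation u1 := (x0 * a + (sh mu)`_1).
Local Notation u2 := (sh mu)`_2.

Lemma mult_ge3_plane_eqnP :
  mult_ge 3 (plane_eqn (a *: 'X + b%:P) mu phi psi) x0 t0 <->
  [/\ u0 ^+ 2 - x0 ^+ 3 - x0 * (sh phi)`_0 - (sh psi)`_0 = 0,
      2%:R * u0 * u1 - x0 * (sh phi)`_1 - (sh psi)`_1 = 0 &
      2%:R * u0 * u2 + u1 ^+ 2 - x0 * (sh phi)`_2 - (sh psi)`_2 = 0] /\
  [/\ 2%:R * s * u0 - 3%:R * x0 ^+ 2 - (sh phi)`_0 = 0,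
      2%:R * (s * u1 + a * u0) - (sh phi)`_1 = 0 &
      s ^+ 2 - 3%:R * x0 = 0].
Proof.
rewrite /mult_ge /= plane_eqn_shift shift_linear; set P := Poly _.
have coefE := (coef_Poly, coefB, coefD, coefMn, coefCM, coefC, expr2, coef0M, coef1M, coef2M).
have E00 : P`_0`_0 = u0 ^+ 2 - x0 ^+ 3 - x0 * (sh phi)`_0 - (sh psi)`_0.
  by rewrite !coefE /=; ring.
have E01 : P`_0`_1 = 2%:R * u0 * u1 - x0 * (sh phi)`_1 - (sh psi)`_1.
  by rewrite !coefE /=; ring.
have E02 : P`_0`_2 = 2%:R * u0 * u2 + u1 ^+ 2 - x0 * (sh phi)`_2 - (sh psi)`_2.
  by rewrite !coefE /=; ring.
have E10 : P`_1`_0 = 2%:R * s * u0 - 3%:R * x0 ^+ 2 - (sh phi)`_0.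
  by rewrite !coefE /=; ring.
have E11 : P`_1`_1 = 2%:R * (s * u1 + a * u0) - (sh phi)`_1.
  by rewrite !coefE /=; ring.
have E20 : P`_2`_0 = s ^+ 2 - 3%:R * x0.
  by rewrite !coefE /=; ring.
rewrite -E00 -E01 -E02 -E10 -E11 -E20.
split=> [P0 | [[? ? ?] [? ? ?]] [|[|[|i]]] [|[|[|j]]] //].
by split; split; apply: P0.
Qed.

End PlaneEquation.

Lemma on_trisecP (F : fieldType) (a b c d e gam x y t : F) :
  on_trisec a b c d e gam x y t <-> (cubic c d e gam).[t] = y - (a * t + b) * x.
Proof.
rewrite /on_trisec horner_cubic.
by split=> [-> | E]; [ring | rewrite -[y](subrK ((a * t + b) * x)) -E; ring].
Qed.

Section CubicInterpolation.
Variables (F : fieldType) (t0 : F).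
Local Notation sh p := (p \Po ('X + t0%:P)).

(* mu(0) for the cubic mu with Taylor coefficients m0, m1, m2 at t0 and mu(t) = v *)
Definition cubic_interp_coef0 (m0 m1 m2 t v : F) : F :=
  let h := t - t0 in
  let c := (v - (m0 + m1 * h + m2 * h ^+ 2)) / h ^+ 3 in
  m0 - m1 * t0 + m2 * t0 ^+ 2 - c * t0 ^+ 3.

Lemma cubic_interpP (m0 m1 m2 t v gam : F) : t != t0 ->
  (exists c d e, [/\ (sh (cubic c d e gam))`_0 = m0, (sh (cubic c d e gam))`_1 = m1,
                     (sh (cubic c d e gam))`_2 = m2 & (cubic c d e gam).[t] = v])
  <-> gam = cubic_interp_coef0 m0 m1 m2 t v.
Proof.
rewrite -subr_eq0 => ht.
split=> [[c [d [e]]] | ->].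
  rewrite shift_cubic !coef_Poly /= !horner_cubic => -[<- <- <- <-].
  by rewrite /cubic_interp_coef0; field.
set c := (v - (m0 + m1 * (t - t0) + m2 * (t - t0) ^+ 2)) / (t - t0) ^+ 3.
set d := m2 - 3%:R * c * t0.
exists c, d, (m1 - 3%:R * c * t0 ^+ 2 - 2%:R * d * t0).
rewrite shift_cubic !coef_Poly /= !horner_cubic /cubic_interp_coef0 -/c /d.
by split; [ring | ring | ring | rewrite /c; field].
Qed.

End CubicInterpolation.

Section TriplePointAtQ.
Variables (F : fieldType) (f g : {poly F}) (a b t0 : F).

Local Notation sh p := (p \Po ('X + t0%:P)).
Local Notation s := (a * t0 + b).
Local Notation xQ := (Qx a b t0).
Local Notation yQ := (Qy f a b t0).

(* u'(t0) and u''(t0)/2, where u(t) = xQ (a t + b) + mu(t) is the y-coordinate of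
   the trisection over x = xQ, as imposed by a triple point at Q *)
Definition Qjet1 : F := ((sh f)`_1 - 2%:R * a * yQ) / (2%:R * s).

Definition Qjet2 : F := (xQ * (sh f)`_2 + (sh g)`_2 - Qjet1 ^+ 2) / (2%:R * yQ).

Definition trisec_gam (x y t : F) : F :=
  cubic_interp_coef0 t0 (yQ - s * xQ) (Qjet1 - a * xQ) Qjet2 t (y - (a * t + b) * x).

Lemma PFam_shift_coefs :
  (sh (PFam f g a b))`_0 = - (4%:R)^-1 * (sh f)`_0 ^+ 2
    + (6%:R)^-1 * (s ^+ 4 * (sh f)`_0) + s ^+ 2 * (sh g)`_0 + (108%:R)^-1 * s ^+ 8
  /\ (sh (PFam f g a b))`_1 = - (4%:R)^-1 * (2%:R * (sh f)`_0 * (sh f)`_1)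
    + (6%:R)^-1 * (4%:R * s ^+ 3 * a * (sh f)`_0 + s ^+ 4 * (sh f)`_1)
    + (2%:R * s * a * (sh g)`_0 + s ^+ 2 * (sh g)`_1)
    + (108%:R)^-1 * (8%:R * s ^+ 7 * a).
Proof.
have -> : sh (PFam f g a b) = (- (4%:R)^-1) *: sh f ^+ 2
    + (6%:R)^-1 *: (Poly [:: s; a] ^+ 4 * sh f) + Poly [:: s; a] ^+ 2 * sh g
    + (108%:R)^-1 *: Poly [:: s; a] ^+ 8.
  rewrite /PFam; cbv zeta; rewrite !comp_polyD !comp_polyZ !comp_polyM shift_linear.
  by rewrite -!mul_polyC; ring.
split; first by rewrite !(coefD, coefZ, coef0M, coef0Xn, coef_Poly) /=; ring.
by rewrite !(coefD, coefZ, coef1M, coef0M, coef1Xn, coef0Xn, coef_Poly) /=; ring.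
Qed.

Hypotheses (h2 : 2%:R != 0 :> F) (h3 : 3%:R != 0 :> F).
Hypothesis hFam : in_Fam f g a b t0.

Let natr_neq0 i k : (2 ^ i * 3 ^ k)%:R != 0 :> F.
Proof. by rewrite natrM !natrX mulf_neq0 ?expf_neq0. Qed.

Let h4 : 4%:R != 0 :> F := natr_neq0 2 0.
Let h6 : 6%:R != 0 :> F := natr_neq0 1 1.
Let h108 : 108%:R != 0 :> F := natr_neq0 2 3.

Lemma Fam_s_neq0 : s != 0.
Proof. by case: hFam. Qed.

Lemma Fam_yQ_neq0 : yQ != 0.
Proof.
case: hFam => _ hs hf0 _; apply: contra hf0 => /eqP yQ0; apply/eqP.
have -> : f.[t0] = yQ * (2%:R * s) - s ^+ 4 / 3%:R.
  by rewrite /Qy; field; rewrite ?h2 ?h3 ?h6 ?hs.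
by rewrite yQ0 mul0r sub0r mulNr.
Qed.

Lemma Fam_PFam_shift_eq0 :
  (sh (PFam f g a b))`_0 = 0 /\ (sh (PFam f g a b))`_1 = 0.
Proof. by case: hFam => _ _ _ /andP[/shift_coef01_eq0]. Qed.

Lemma Fam_Q_on_surface : yQ ^+ 2 - xQ ^+ 3 - xQ * (sh f)`_0 - (sh g)`_0 = 0.
Proof.
have [P0 _] := Fam_PFam_shift_eq0; have [P0E _] := PFam_shift_coefs.
have hs := Fam_s_neq0.
transitivity (- (s ^+ 2)^-1 * (sh (PFam f g a b))`_0); last by rewrite P0 mulr0.
rewrite P0E /Qx /Qy -coef0_shift.
by field; rewrite ?h2 ?h3 ?h4 ?h6 ?h108 ?hs.
Qed.

Lemma Fam_Q_tangent : 2%:R * yQ * Qjet1 - xQ * (sh f)`_1 - (sh g)`_1 = 0.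
Proof.
have [P0 P1] := Fam_PFam_shift_eq0; have [P0E P1E] := PFam_shift_coefs.
have hs := Fam_s_neq0.
transitivity (2%:R * a / s ^+ 3 * (sh (PFam f g a b))`_0
              - (s ^+ 2)^-1 * (sh (PFam f g a b))`_1).
  rewrite P0E P1E /Qjet1 /Qx /Qy -coef0_shift.
  by field; rewrite ?h2 ?h3 ?h4 ?h6 ?h108 ?hs.
by rewrite P0 P1 !mulr0 subr0.
Qed.

Lemma triple_at_QP c d e gam :
  triple_at f g a b c d e gam xQ yQ t0 <->
  [/\ (sh (cubic c d e gam))`_0 = yQ - s * xQ,
      (sh (cubic c d e gam))`_1 = Qjet1 - a * xQ &
      (sh (cubic c d e gam))`_2 = Qjet2].
Proof.
rewrite /triple_at on_trisecP trisec_polyE mult_ge3_plane_eqnP -coef0_shift.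
set m := sh (cubic c d e gam).
have hs := Fam_s_neq0; have hyQ := Fam_yQ_neq0.
split=> [[m0E [[_ _ E02] [_ E11 _]]] | [m0E m1E m2E]].
  have m1E : m`_1 = Qjet1 - a * xQ.
    move/eqP: E11; rewrite subr_eq0 m0E /Qjet1 => /eqP <-.
    by field; rewrite ?h2 ?hs.
  split=> //; move/eqP: E02; rewrite subr_eq0 m0E m1E => /eqP E02.
  by rewrite /Qjet2 -E02; field; rewrite ?h2 ?hyQ.
split=> //; rewrite m0E m1E m2E.
have -> : xQ * s + (yQ - s * xQ) = yQ by ring.
have -> : xQ * a + (Qjet1 - a * xQ) = Qjet1 by ring.
split; split.
- exact: Fam_Q_on_surface.
- exact: Fam_Q_tangent.
- by rewrite /Qjet2; field; rewrite ?h2 ?hyQ.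
- by rewrite /Qx /Qy -coef0_shift; field; rewrite ?h2 ?h3 ?h6 ?hs.
- by rewrite /Qjet1; field; rewrite ?h2 ?hs.
- by rewrite /Qx; field; rewrite ?h3.
Qed.

Lemma in_T_QP gam x y t : t != t0 ->
  in_T f g a b xQ yQ t0 gam x y t <-> gam = trisec_gam x y t.
Proof.
move=> ht; rewrite -cubic_interpP //.
split=> -[c [d [e]]].
  by case=> /triple_at_QP[m0E m1E m2E] /on_trisecP vE; exists c, d, e.
by case=> m0E m1E m2E vE; exists c, d, e; split; [exact/triple_at_QP | exact/on_trisecP].
Qed.

End TriplePointAtQ.

Section SubfieldClosure.
Variables (M : fieldType) (S : M -> Prop).
Hypothesis hS : subfield_pred S.

Lemma subfield_pred1 : S 1. Proof. by case: hS. Qed.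

Lemma subfield_predD x y : S x -> S y -> S (x + y).
Proof. by case: hS => _ _ SD _ _; apply: SD. Qed.

Lemma subfield_predN x : S x -> S (- x).
Proof. by case: hS => _ _ _ SN _; apply: SN. Qed.

Lemma subfield_predM x y : S x -> S y -> S (x * y).
Proof. by case: hS => _ _ _ _ [SM _]; apply: SM. Qed.

Lemma subfield_predV x : S x -> S x^-1.
Proof.
case: hS => S0 _ _ _ [_ SV] Sx.
by have [->|x_neq0] := eqVneq x 0; [rewrite invr0 | apply: SV].
Qed.

Lemma subfield_pred_nat n : S n%:R.
Proof.
case: hS => S0 _ _ _ _.
by elim: n => [|n IHn] //; rewrite mulrSr; apply: subfield_predD => //; apply: subfield_pred1.
Qed.

Lemma subfield_predX x n : S x -> S (x ^+ n).
Proof.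
move=> Sx; elim: n => [|n IHn]; first by rewrite expr0; apply: subfield_pred1.
by rewrite exprS; apply: subfield_predM.
Qed.

End SubfieldClosure.

Ltac subfield_closure hS := repeat first
  [ assumption | apply: (subfield_predD hS) | apply: (subfield_predM hS)
  | apply: (subfield_predN hS) | apply: (subfield_predV hS)
  | apply: (subfield_pred_nat hS) | apply: (subfield_predX hS)
  | exact: (subfield_pred1 hS) ].

Section FieldMorphism.
Variables (L M : fieldType) (j : {rmorphism L -> M}).

Lemma subfield_pred_range : subfield_pred (fun z => exists l, z = j l).
Proof.
split; first by exists 0; rewrite rmorph0.
- by exists 1; rewrite rmorph1.
- by move=> _ _ [x ->] [y ->]; exists (x + y); rewrite rmorphD.
- by move=> _ [x ->]; exists (- x); rewrite rmorphN.
split; first by move=> _ _ [x ->] [y ->]; exists (x * y); rewrite rmorphM.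
by move=> _ [x ->] _; exists x^-1; rewrite fmorphV.
Qed.

Lemma shift_map (p : {poly L}) (t : L) :
  map_poly j p \Po ('X + (j t)%:P) = map_poly j (p \Po ('X + t%:P)).
Proof. by rewrite map_comp_poly map_polyXaddC. Qed.

Lemma PFam_map (f g : {poly L}) (a b : L) :
  map_poly j (PFam f g a b) = PFam (map_poly j f) (map_poly j g) (j a) (j b).
Proof.
rewrite /PFam !rmorphD /= !map_polyZ /= !rmorphXn (rmorphM _ _ f) (rmorphM _ _ g) /=.
rewrite !rmorphXn !rmorphD /= map_polyZ map_polyX map_polyC /=.
by rewrite ?(rmorphN, fmorphV, rmorph_nat).
Qed.

Lemma in_Fam_map (f g : {poly L}) (a b t0 : L) :
  in_Fam f g a b t0 ->
  in_Fam (map_poly j f) (map_poly j g) (j a) (j b) (j t0).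
Proof.
have XsubC_map k : ('X - (j t0)%:P) ^+ k = map_poly j (('X - t0%:P) ^+ k).
  by rewrite rmorphXn /= map_polyXsubC.
rewrite /in_Fam /double_root -PFam_map !XsubC_map !dvdp_map.
have -> : - (j a * j t0 + j b) ^+ 4 / 3%:R = j (- (a * t0 + b) ^+ 4 / 3%:R).
  by rewrite fmorph_div rmorphN rmorphXn rmorphD rmorphM rmorph_nat.
by rewrite horner_map -rmorphM -rmorphD !fmorph_eq0 (inj_eq (fmorph_inj j)).
Qed.

Lemma Qx_map (a b t0 : L) : j (Qx a b t0) = Qx (j a) (j b) (j t0).
Proof. by rewrite /Qx fmorph_div rmorphXn rmorphD rmorphM rmorph_nat. Qed.

Lemma Qy_map (f : {poly L}) (a b t0 : L) :
  j (Qy f a b t0) = Qy (map_poly j f) (j a) (j b) (j t0).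
Proof.
by rewrite /Qy horner_map rmorphD !fmorph_div rmorphXn !rmorphM !rmorph_nat !rmorphD !rmorphM.
Qed.

Lemma trisec_gam_in_gen_field (f g : {poly L}) (a b t0 : L) (x y t : M) :
  in_gen_field j x y t
    (trisec_gam (map_poly j f) (map_poly j g) (j a) (j b) (j t0) x y t).
Proof.
move=> S hS Sj Sx Sy St.
rewrite /trisec_gam /cubic_interp_coef0 /Qjet2 /Qjet1 /Qx /Qy.
rewrite !shift_map !coef_map horner_map.
by subfield_closure hS; apply: Sj.
Qed.

End FieldMorphism.

Theorem proposition3p7 (k : fieldType) (hk : [pchar k] =i pred0)
  (f g : {poly k}) (hf : (size f <= 5)%N) (hg : (size g <= 7)%N)
  (hS : smooth_dP1 f g)
  (L : fieldType) (iota : {rmorphism k -> L}) (a b t0 : L)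
  (hFam : in_Fam (map_poly iota f) (map_poly iota g) a b t0)
  (M : fieldType) (j : {rmorphism L -> M}) (xR yR tR : M)
  (hR : yR ^+ 2 = xR ^+ 3 + (map_poly j (map_poly iota f)).[tR] * xR
                  + (map_poly j (map_poly iota g)).[tR])
  (htR : tR != j t0) :
  let fM := map_poly j (map_poly iota f) in
  let gM := map_poly j (map_poly iota g) in
  let xQ := j (Qx a b t0) in
  let yQ := j (Qy (map_poly iota f) a b t0) in
  (exists gam : M,
     [/\ in_gen_field j xR yR tR gam,
         in_T fM gM (j a) (j b) xQ yQ (j t0) gam xR yR tR
       & forall gam' : M, in_gen_field j xR yR tR gam' ->
           in_T fM gM (j a) (j b) xQ yQ (j t0) gam' xR yR tR -> gam' = gam])
  /\
  ((exists xl yl tl : L, [/\ xR = j xl, yR = j yl & tR = j tl]) ->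
   exists gam0 : L, in_T fM gM (j a) (j b) xQ yQ (j t0) (j gam0) xR yR tR).
Proof.
move=> fM gM xQ yQ; rewrite {}/xQ {}/yQ Qx_map Qy_map.
have charM : [pchar M] =i pred0 by move=> p; rewrite (fmorph_pchar j) (fmorph_pchar iota).
have [h2 h3] : 2%:R != 0 :> M /\ 3%:R != 0 :> M.
  by move/pcharf0P: charM => charM; rewrite !charM.
have gamE gam := in_T_QP h2 h3 (in_Fam_map j hFam) gam xR yR htR.
split.
  exists (trisec_gam fM gM (j a) (j b) (j t0) xR yR tR).
  by split=> [|| gam' _]; [exact: trisec_gam_in_gen_field | exact/gamE | move/gamE].
case=> xl [yl [tl [xRE yRE tRE]]].
have [gam0 gam0E] : exists gam0, trisec_gam fM gM (j a) (j b) (j t0) xR yR tR = j gam0.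
  apply: (trisec_gam_in_gen_field (map_poly iota f) (map_poly iota g) a b t0 (subfield_pred_range j)).
  - by move=> l; exists l.
  - by exists xl.
  - by exists yl.
  - by exists tl.
by exists gam0; apply/gamE; rewrite gam0E.
Qed.
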